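(* Let $\mathcal{V}$ and $\mathcal{X}$ be finite sets, let $k\ge1$, $T\ge1$ be integers, and let $f:2^{\mathcal{V}\times\mathcal{X}}\to\mathbb{R}_{\ge0}$ satisfy $f(\emptyset)=0$ and be monotone and submodular: for all $W_1\subseteq W_2\subseteq\mathcal{V}\times\mathcal{X}$ and all $W\subseteq\mathcal{V}\times\mathcal{X}$, $f(W_2)\ge f(W_1)$ and $\Delta(W\mid W_1)\ge\Delta(W\mid W_2)$, where $\Delta(A\mid S)=f(S\cup A)-f(S)$. Suppose moreover there is a constant $C(k)>0$ such that for every $x\in\mathcal{X}$ and every $S\subseteq\mathcal{V}\times\mathcal{X}$ there exists $R(x,S)\subseteq\mathcal{V}$ with $|R(x,S)|\le k$ and $$\Delta\big(R(x,S)\times\{x\}\mid S\big)\ge C(k)\,\Delta\big(\mathcal{V}\times\{x\}\mid S\big).$$ Define the two-stage greedy sequence by $S_0=\emptyset$ and, for $t=1,\dots,T$, $$x_t\in\arg\max_{x\in\mathcal{X}}\Delta(\mathcal{V}\times\{x\}\mid S_{t-1}),\qquad R_t\in\arg\max_{R\subseteq\mathcal{V},\,|R|\le k}\Delta(R\times\{x_t\}\mid S_{t-1}),\qquad S_t=S_{t-1}\cup(R_t\times\{x_t\}).$$ Then for every sequence $(R_1^*,x_1^* ),\dots,(R_T^*,x_T^* )$ with $R_t^*\subseteq\mathcal{V}$, $|R_t^*|\le k$ and pairwise distinct $x_1^*,\dots,x_T^*\in\mathcal{X}$, setting $S_T^*=\bigcup_{t=1}^T R_t^*\times\{x_t^*\}$,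 $$f(S_T^* )\le\frac{2}{1-e^{-2C(k)}}\,f(S_T).$$
   Context: A pair $(R,x)$ with $R\subseteq\mathcal{V}$ (respondents), $x\in\mathcal{X}$ (query) is identified with the set $R\times\{x\}\subseteq\mathcal{V}\times\mathcal{X}$; histories are unions of such sets. The first stage chooses the query that would be most informative if asked to all respondents; the second stage chooses at most $k$ respondents for that query. *)

From HB Require Import structures.
From mathcomp Require Import all_boot all_order all_algebra.
From mathcomp Require Import reals.
From mathcomp Require Import sequences exp.
Set Implicit Arguments. Unset Strict Implicit. Unset Printing Implicit Defensive.
Import Order.TTheory GRing.Theory Num.Theory.
Local Open Scope ring_scope.

Section Defs.
Variables (R : realType) (V X : finType).

Definition marg (f : {set (V * X)} -> R) (A S : {set (V * X)}) : R :=
  f (S :|: A) - f S.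

Definition pairset (Rs : {set V}) (x : X) : {set (V * X)} := setX Rs [set x].

Definition hist (xs : nat -> X) (Rs : nat -> {set V}) (t : nat) : {set (V * X)} :=
  \bigcup_(i < t) pairset (Rs i) (xs i).

(* (xs, Rs) is a run of the two-stage greedy procedure for T steps:
   step t+1 (0-indexed t < T) chooses xs t and Rs t from S_t = hist xs Rs t. *)
Definition two_stage_greedy (f : {set (V * X)} -> R) (k T : nat)
    (xs : nat -> X) (Rs : nat -> {set V}) : Prop :=
  forall t, (t < T)%N ->
    [/\ forall x, marg f (pairset [set: V] x) (hist xs Rs t)
                  <= marg f (pairset [set: V] (xs t)) (hist xs Rs t),
        (#|Rs t| <= k)%N &
        forall R' : {set V}, (#|R'| <= k)%N ->
          marg f (pairset R' (xs t)) (hist xs Rs t)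
          <= marg f (pairset (Rs t) (xs t)) (hist xs Rs t)].
End Defs.

From mathcomp Require Import all_boot all_order all_algebra.
From mathcomp Require Import reals.
From mathcomp Require Import sequences exp.
From mathcomp Require Import ring lra.
Set Implicit Arguments.
Unset Strict Implicit.
Unset Printing Implicit Defensive.
Import Order.TTheory GRing.Theory Num.Theory.
Local Open Scope ring_scope.

(* Let S_t be the greedy history and OPT = f(S*_T).  By submodularity,
   OPT - f(S_t) is at most the sum of the T marginal gains of the pairs
   (R*_j, x*_j) over S_t; each of them is at most the gain of asking the
   greedily chosen query x_t to everybody, which by the hypothesis on C(k) and
   the greedy choice of R_t is at most (f(S_{t+1}) - f(S_t)) / C.  Hence the
   gap OPT - f(S_t) shrinks by a factor 1 - C/T per step, so that
   f(S_T) >= (1 - e^{-C}) OPT, and 1/(1 - e^{-C}) <= 2/(1 - e^{-2C}). *)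

Section Marginals.
Variables (R : realType) (V X : finType) (f : {set (V * X)} -> R).
Hypothesis f_mono : forall W1 W2 : {set (V * X)}, W1 \subset W2 -> f W1 <= f W2.
Hypothesis f_submod : forall W1 W2 W : {set (V * X)}, W1 \subset W2 ->
  marg f W W2 <= marg f W W1.

Lemma marg_setU (A B S : {set (V * X)}) :
  marg f (A :|: B) S = marg f A S + marg f B (S :|: A).
Proof. by rewrite /marg setUA; ring. Qed.

Lemma marg_bigcup_le (I : Type) (r : seq I) (F : I -> {set (V * X)})
    (S : {set (V * X)}) :
  marg f (\bigcup_(i <- r) F i) S <= \sum_(i <- r) marg f (F i) S.
Proof.
elim: r => [|a r IH]; first by rewrite !big_nil /marg setU0 subrr.
rewrite !big_cons marg_setU lerD2l; apply: le_trans IH.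
exact/f_submod/subsetUl.
Qed.

Lemma marg_subset (A B S : {set (V * X)}) :
  A \subset B -> marg f A S <= marg f B S.
Proof. by move=> AB; rewrite lerD2r; apply/f_mono/setUS. Qed.

Lemma sub_le_marg (A S : {set (V * X)}) : f A - f S <= marg f A S.
Proof. by rewrite lerD2r; apply/f_mono/subsetUr. Qed.

End Marginals.

Section GreedyGain.
Variables (R : realType) (V X : finType) (f : {set (V * X)} -> R).
Hypothesis f_mono : forall W1 W2 : {set (V * X)}, W1 \subset W2 -> f W1 <= f W2.
Hypothesis f_submod : forall W1 W2 W : {set (V * X)}, W1 \subset W2 ->
  marg f W W2 <= marg f W W1.
Variables (k T : nat) (C : R) (xs : nat -> X) (Rs : nat -> {set V}).
Hypothesis C_ge0 : 0 <= C.
Hypothesis hRk : forall (x : X) (S : {set (V * X)}), exists Rx : {set V},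
  (#|Rx| <= k)%N /\ C * marg f (pairset [set: V] x) S <= marg f (pairset Rx x) S.
Hypothesis hgreedy : two_stage_greedy f k T xs Rs.

Lemma hist_recr t : hist xs Rs t.+1 = hist xs Rs t :|: pairset (Rs t) (xs t).
Proof. by rewrite /hist big_ord_recr. Qed.

Lemma f_hist_mono t : f (hist xs Rs t) <= f (hist xs Rs t.+1).
Proof. by rewrite hist_recr; apply/f_mono/subsetUl. Qed.

Lemma greedy_step_gain t : (t < T)%N ->
  C * marg f (pairset [set: V] (xs t)) (hist xs Rs t)
    <= f (hist xs Rs t.+1) - f (hist xs Rs t).
Proof.
move=> tT; have [_ _ bestR] := hgreedy tT.
have [Rx [Rx_k gainRx]] := hRk (xs t) (hist xs Rs t).
apply: le_trans gainRx (le_trans (bestR _ Rx_k) _).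
by rewrite /marg hist_recr.
Qed.

Lemma greedy_gain n (xstar : 'I_n -> X) (Rstar : 'I_n -> {set V}) t :
  (t < T)%N ->
  C * (f (\bigcup_(j < n) pairset (Rstar j) (xstar j)) - f (hist xs Rs t))
    <= n%:R * (f (hist xs Rs t.+1) - f (hist xs Rs t)).
Proof.
move=> tT; have [bestx _ _] := hgreedy tT.
set S := hist xs Rs t; set M := marg f (pairset [set: V] (xs t)) S.
have opt_le : f (\bigcup_(j < n) pairset (Rstar j) (xstar j)) - f S <= n%:R * M.
  apply: le_trans (sub_le_marg f_mono _ _) _.
  apply: le_trans (marg_bigcup_le f_submod _ _ _) _.
  rewrite mulr_natl -[n in M *+ n]card_ord -sumr_const; apply: ler_sum => j _.
  apply: le_trans (bestx (xstar j)); apply: marg_subset => //.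
  exact/setXS/subxx/subsetT.
apply: le_trans (ler_wpM2l C_ge0 opt_le) _.
by rewrite mulrCA ler_wpM2l ?ler0n ?greedy_step_gain.
Qed.

End GreedyGain.

Section GapDecay.
Variables (R : realType) (a : nat -> R) (O : R).
Hypothesis a_mono : forall t, a t <= a t.+1.

Lemma gap_contract (d : R) t : 0 <= d -> d * (O - a t) <= a t.+1 - a t ->
  O - a t.+1 <= Num.max (1 - d) 0 * (O - a t).
Proof.
move=> d_ge0 gain; have at_le := a_mono t.
have [gap_ge0 | gap_lt0] := lerP 0 (O - a t).
  have le_q : 1 - d <= Num.max (1 - d) 0 by rewrite le_max lexx.
  apply: le_trans (ler_wpM2r gap_ge0 le_q); lra.
have : 0 <= (1 - Num.max (1 - d) 0) * (a t - O).
  by apply: mulr_ge0; rewrite subr_ge0 ?ge_max ?ler01 ?andbT; lra.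
nra.
Qed.

Lemma gap_le_expR (c : R) n : 0 <= c -> (0 < n)%N -> a 0 <= O ->
  (forall t, (t < n)%N -> c * (O - a t) <= n%:R * (a t.+1 - a t)) ->
  O - a n <= expR (- c) * (O - a 0).
Proof.
move=> c_ge0 n_gt0 a0_le gain.
have n_pos : 0 < n%:R :> R by rewrite ltr0n.
set q := Num.max (1 - c / n%:R) 0.
have q_ge0 : 0 <= q by rewrite le_max lexx orbT.
have gap_iter m : (m <= n)%N -> O - a m <= q ^+ m * (O - a 0).
  elim: m => [|m IH] mn; first by rewrite expr0 mul1r.
  have d_ge0 : 0 <= c / n%:R by rewrite divr_ge0 ?ler0n.
  have gain_m : c / n%:R * (O - a m) <= a m.+1 - a m.
    by rewrite mulrAC ler_pdivrMr // [_ * n%:R]mulrC; apply: gain.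
  apply: le_trans (gap_contract d_ge0 gain_m) _.
  by rewrite exprS -mulrA ler_wpM2l // IH // ltnW.
apply: le_trans (gap_iter n (leqnn n)) _; rewrite ler_wpM2r ?subr_ge0 //.
have -> : - c = n%:R * - (c / n%:R) by field; rewrite lt0r_neq0.
rewrite expRM_natl lerXn2r ?nnegrE ?(ltW (expR_gt0 _)) //.
by rewrite ge_max (ltW (expR_gt0 _)) andbT; apply: expR_ge1Dx.
Qed.

End GapDecay.

Lemma le_two_div_one_subX2 (R : realFieldType) (E O g : R) :
  0 <= E < 1 -> 0 <= g -> (1 - E) * O <= g -> O <= 2 / (1 - E ^+ 2) * g.
Proof.
case/andP=> E_ge0 E_lt1 g_ge0 approx.
have den_gt0 : 0 < 1 - E ^+ 2 by rewrite expr2; nra.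
by rewrite mulrC mulrA ler_pdivlMr //; nra.
Qed.

Theorem mainTheorem2 (R : realType) (V X : finType) (k T : nat)
    (f : {set (V * X)} -> R) (C : R)
    (hk : (1 <= k)%N) (hT : (1 <= T)%N)
    (f_nonneg : forall W, 0 <= f W)
    (f_empty : f set0 = 0)
    (f_mono : forall W1 W2 : {set (V * X)}, W1 \subset W2 -> f W1 <= f W2)
    (f_submod : forall W1 W2 W : {set (V * X)}, W1 \subset W2 ->
        marg f W W2 <= marg f W W1)
    (hC : 0 < C)
    (hRk : forall (x : X) (S : {set (V * X)}), exists Rx : {set V},
        (#|Rx| <= k)%N /\
        C * marg f (pairset [set: V] x) S <= marg f (pairset Rx x) S)
    (xs : nat -> X) (Rs : nat -> {set V})
    (hgreedy : two_stage_greedy f k T xs Rs)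
    (xstar : 'I_T -> X) (Rstar : 'I_T -> {set V})
    (hxstar : injective xstar)
    (hRstar : forall t, (#|Rstar t| <= k)%N) :
  f (\bigcup_(t < T) pairset (Rstar t) (xstar t))
    <= 2 / (1 - expR (- (2 * C))) * f (hist xs Rs T).
Proof.
set OPT := f _; set E := expR (- C).
have hist0 : f (hist xs Rs 0) = 0 by rewrite /hist big_ord0.
have gap : OPT - f (hist xs Rs T) <= E * OPT.
  rewrite -[X in E * X]subr0 -hist0.
  apply: (gap_le_expR (f_hist_mono f_mono xs Rs) (ltW hC) hT).
    by rewrite /= hist0 f_nonneg.
  move=> t tT.
  exact: (greedy_gain f_mono f_submod (ltW hC) hRk hgreedy xstar Rstar tT).
have -> : expR (- (2 * C)) = E ^+ 2 by rewrite -expRM_natl mulrN.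
apply: le_two_div_one_subX2 (f_nonneg _) _.
  by rewrite (ltW (expR_gt0 _)) expR_lt1 oppr_lt0.
lra.
Qed.
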